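(* Fix $\epsilon>0$ and let $\theta=\theta(n)\in[0,\epsilon]$ be any function. Then $$\frac{\mu_k}{k_1!\,k_2!}\ge b^{\theta n/2}\exp(o(n)),$$ i.e. there is a function $h(n)=o(n)$ with $\mu_k/(k_1!k_2!)\ge b^{\theta(n)n/2}e^{h(n)}$ for all $n$.
   Context: Let $p\in(0,1)$ be constant, $q=1-p$, $b=1/q$, $\gamma=2\log_b n-2\log_b\log_b n-2\log_b 2$, $\Delta=\gamma-\lfloor\gamma\rfloor$, and $x_0=x_0(n)$ the smallest nonnegative $x$ with $(1-\Delta+x)\log_b(1-\Delta+x)+(1-\Delta)(\Delta-x)/2\le0$. Let $k=\lceil n/(\gamma-x_0-\theta)\rceil$, $\delta=n/k-\lfloor n/k\rfloor$, $k_1=\delta k$, $k_2=(1-\delta)k$. An ordered $k$-equipartition of the vertex set $[n]$ is a sequence of $k$ disjoint sets covering $[n]$, the first $k_1$ of size $\lceil n/k\rceil$ and the remaining $k_2$ of size $\lfloor n/k\rfloor$. Let $P=n!/(\lceil n/k\rceil!^{k_1}\lfloor n/k\rfloor!^{k_2})$ be their number, $f=k_1\binom{\lceil n/k\rceil}{2}+k_2\binom{\lfloor n/k\rfloor}{2}$, and $\mu_k=Pq^f$, which is the expected number of ordered $k$-equipartitions all of whose parts are independent sets in $G\sim\mathcal{G}(n,p)$. *)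

From Stdlib Require Import Reals Lra Lia Arith.
Open Scope R_scope.

Definition qq (p : R) : R := 1 - p.
Definition bb (p : R) : R := 1 / qq p.
Definition logb (p x : R) : R := ln x / ln (bb p).

(* floor and ceiling on R (Int_part x = up x - 1 is the floor of x) *)
Definition floorR (x : R) : Z := Int_part x.
Definition ceilR (x : R) : Z := (- Int_part (- x))%Z.

Definition gam (p : R) (n : nat) : R :=
  2 * logb p (INR n) - 2 * logb p (logb p (INR n)) - 2 * logb p 2.
Definition Delta (p : R) (n : nat) : R := gam p n - IZR (floorR (gam p n)).

Definition Fx0 (p D x : R) : R :=
  (1 - D + x) * logb p (1 - D + x) + (1 - D) * (D - x) / 2.

Definition is_x0 (p : R) (n : nat) (x : R) : Prop :=
  0 <= x /\ Fx0 p (Delta p n) x <= 0 /\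
  (forall y, 0 <= y -> Fx0 p (Delta p n) y <= 0 -> x <= y).

Definition kk (p : R) (n : nat) (x0 th : R) : nat :=
  Z.to_nat (ceilR (INR n / (gam p n - x0 - th))).

(* With k parts: ceil(n/k) and floor(n/k); k1 = delta*k = n - k*floor(n/k),
   k2 = (1-delta)*k = k - k1. *)
Definition szfl (n k : nat) : nat := Nat.div n k.
Definition szcl (n k : nat) : nat := Z.to_nat (ceilR (INR n / INR k)).
Definition k1 (n k : nat) : nat := (n - k * Nat.div n k)%nat.
Definition k2 (n k : nat) : nat := (k - k1 n k)%nat.

Definition Pnum (n k : nat) : R :=
  INR (fact n) / (INR (fact (szcl n k)) ^ k1 n k * INR (fact (szfl n k)) ^ k2 n k).
Definition fedges (n k : nat) : nat :=
  (k1 n k * (szcl n k * (szcl n k - 1) / 2) + k2 n k * (szfl n k * (szfl n k - 1) / 2))%nat.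
Definition mu (p : R) (n k : nat) : R := Pnum n k * qq p ^ fedges n k.

From Pilot Require Import Defs.
From Stdlib Require Import Reals Lra Lia Arith ZArith.
From Coquelicot Require Import Coquelicot.
Open Scope R_scope.

(* Take logarithms.  The Stirling-type bounds m ln m - m <= ln m! <= m ln m - m + ln m + 1,
   together with f <= n (n/k - 1) / 2 + k / 8 for the number of pairs inside the parts,
   give for every real D >= 1 and k = ceil (n / D)
     ln (mu_k / (k1! k2!)) >= n ln n - n ln D - ln b * n (D - 1) / 2 - O((n / D + 1) ln n).
   For D = gamma - x0 - theta and T = log_b n one has
   ln b * D = 2 ln n - 2 ln T - 2 ln 2 - ln b (x0 + theta) and T <= D <= 2T, so the leading
   terms cancel and leave theta n ln b / 2 minus an error O(n / sqrt T + T) = o(n). *)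

Lemma ln_le_sub1 x : 0 < x -> ln x <= x - 1.
Proof.
  intros Hx. pose proof (exp_ineq1_le (ln x)) as H. rewrite exp_ln in H; lra.
Qed.

Lemma ln_le_2sqrt x : 0 < x -> ln x <= 2 * sqrt x.
Proof.
  intros Hx. assert (Hs : 0 < sqrt x) by (apply sqrt_lt_R0; lra).
  rewrite <- (sqrt_sqrt x) at 1 by lra. rewrite ln_mult by lra.
  pose proof (ln_le_sub1 _ Hs). lra.
Qed.

Lemma ln_add_le x y : 0 < x -> 0 <= y -> ln (x + y) <= ln x + y / x.
Proof.
  intros Hx Hy. replace (x + y) with (x * (1 + y / x)) by (field; lra).
  assert (0 <= y / x) by (apply Rdiv_le_0_compat; lra).
  rewrite ln_mult by lra. pose proof (ln_le_sub1 (1 + y / x)). lra.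
Qed.

Lemma Rdiv_le_self a b : 0 <= a -> 1 <= b -> a / b <= a.
Proof.
  intros Ha Hb. unfold Rdiv. rewrite <- (Rmult_1_r a) at 2.
  apply Rmult_le_compat_l; [exact Ha|]. rewrite <- Rinv_1. apply Rinv_le_contravar; lra.
Qed.

Definition lnfact (m : nat) : R := ln (INR (fact m)).

Lemma INR_fact_gt0 m : 0 < INR (fact m).
Proof. apply lt_0_INR, lt_O_fact. Qed.

Lemma lnfact_S m : lnfact (S m) = lnfact m + ln (INR (S m)).
Proof.
  unfold lnfact. rewrite fact_simpl, mult_INR, ln_mult.
  - ring.
  - apply lt_0_INR; lia.
  - apply INR_fact_gt0.
Qed.

(* Both Stirling-type bounds follow by induction from
   1/(m+1) <= ln (m+1) - ln m <= 1/m. *)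
Lemma lnfact_ge m : (1 <= m)%nat -> INR m * ln (INR m) - INR m <= lnfact m.
Proof.
  induction m as [|m IH]; intros Hm; [lia|].
  destruct (Nat.eq_dec m 0) as [->|Hm0].
  { unfold lnfact; simpl. rewrite ln_1. lra. }
  specialize (IH ltac:(lia)). rewrite lnfact_S, S_INR.
  assert (Hp : 0 < INR m) by (apply lt_0_INR; lia).
  assert (Hstep : INR m * (ln (INR m + 1) - ln (INR m)) <= 1).
  { pose proof (ln_add_le (INR m) 1 Hp ltac:(lra)) as H.
    assert (Hd : ln (INR m + 1) - ln (INR m) <= 1 / INR m) by lra.
    apply Rmult_le_compat_l with (r := INR m) in Hd; [|lra].
    replace (INR m * (1 / INR m)) with 1 in Hd by (field; lra). exact Hd. }
  nra.
Qed.

Lemma lnfact_le m : (1 <= m)%nat ->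
  lnfact m <= INR m * ln (INR m) - INR m + ln (INR m) + 1.
Proof.
  induction m as [|m IH]; intros Hm; [lia|].
  destruct (Nat.eq_dec m 0) as [->|Hm0].
  { unfold lnfact; simpl. rewrite ln_1. lra. }
  specialize (IH ltac:(lia)). rewrite lnfact_S, S_INR.
  assert (Hp : 0 < INR m) by (apply lt_0_INR; lia).
  assert (Hstep : 1 <= (INR m + 1) * (ln (INR m + 1) - ln (INR m))).
  { assert (Hd : ln (INR m / (INR m + 1)) <= INR m / (INR m + 1) - 1)
      by (apply ln_le_sub1, Rdiv_lt_0_compat; lra).
    rewrite ln_div in Hd by lra.
    assert (Hr : (INR m + 1) * (INR m / (INR m + 1) - 1) = -1) by (field; lra).
    apply Rmult_le_compat_l with (r := INR m + 1) in Hd; lra. }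
  nra.
Qed.

Lemma lnfact_add_le a b : lnfact a + lnfact b <= lnfact (a + b).
Proof.
  unfold lnfact. rewrite <- ln_mult by apply INR_fact_gt0.
  apply ln_le; [apply Rmult_lt_0_compat; apply INR_fact_gt0|].
  rewrite <- mult_INR. apply le_INR.
  induction b as [|b IH].
  - rewrite Nat.add_0_r; simpl; lia.
  - rewrite Nat.add_succ_r. simpl fact. nia.
Qed.

Lemma ceilR_spec x : IZR (ceilR x) - 1 < x <= IZR (ceilR x).
Proof. unfold ceilR. destruct (base_Int_part (- x)). rewrite opp_IZR. lra. Qed.

Lemma ceilR_unique x m : IZR m - 1 < x <= IZR m -> ceilR x = m.
Proof.
  intros Hm. unfold ceilR.
  rewrite <- (Int_part_spec (- x) (- m)); [lia|]. rewrite opp_IZR. lra.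
Qed.

Lemma INR_ceilR x : 0 < x -> INR (Z.to_nat (ceilR x)) = IZR (ceilR x).
Proof.
  intros Hx. destruct (ceilR_spec x).
  assert (Hc : (0 < ceilR x)%Z) by (apply lt_0_IZR; lra).
  rewrite INR_IZR_INZ, Z2Nat.id by lia. reflexivity.
Qed.

Lemma INR_half_pred_mul_le m : INR (m * (m - 1) / 2) <= INR m * (INR m - 1) / 2.
Proof.
  pose proof (Nat.Div0.mul_div_le (m * (m - 1)) 2) as H.
  apply le_INR in H. rewrite !mult_INR in H. simpl (INR 2) in H.
  destruct m as [|m]; [simpl; lra|].
  replace (S m - 1)%nat with m in * by lia. rewrite S_INR in *. lra.
Qed.

Section Equipartition.

Variables n k : nat.
Hypothesis k_gt0 : (0 < k)%nat.

Lemma k1_mod : k1 n k = (n mod k)%nat.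
Proof. unfold k1. pose proof (Nat.div_mod n k ltac:(lia)). lia. Qed.

Lemma n_divmod : n = (k * szfl n k + k1 n k)%nat.
Proof. rewrite k1_mod. apply Nat.div_mod. lia. Qed.

Lemma k1_add_k2 : (k1 n k + k2 n k)%nat = k.
Proof. unfold k2. rewrite k1_mod. pose proof (Nat.mod_upper_bound n k). lia. Qed.

Lemma szcl_succ : k1 n k <> 0%nat -> szcl n k = S (szfl n k).
Proof.
  intros Hr. unfold szcl.
  rewrite (ceilR_unique _ (Z.of_nat (S (szfl n k)))); [apply Nat2Z.id|].
  rewrite <- INR_IZR_INZ, S_INR.
  assert (Hk : 0 < INR k) by (apply lt_0_INR; lia).
  assert (Hr0 : 0 < INR (k1 n k)) by (apply lt_0_INR; lia).
  assert (Hrk : INR (k1 n k) < INR k)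
    by (rewrite k1_mod; apply lt_INR, Nat.mod_upper_bound; lia).
  assert (Hn : INR n = INR k * INR (szfl n k) + INR (k1 n k))
    by (rewrite <- mult_INR, <- plus_INR, <- n_divmod; reflexivity).
  rewrite Hn. split; apply (Rmult_lt_reg_r (INR k)) || apply (Rmult_le_reg_r (INR k));
    try (field_simplify; lra); lra.
Qed.

(* Writing n = k a + j1, k = j1 + j2, one has
   n (n - k) + k^2/4 - k (j1 (a+1) a + j2 a (a-1)) = (j1 - k/2)^2. *)
Lemma fedges_le : INR (fedges n k) <= INR n * (INR n / INR k - 1) / 2 + INR k / 8.
Proof.
  set (a := INR (szfl n k)). set (j1 := INR (k1 n k)). set (j2 := INR (k2 n k)).
  assert (Hk : 0 < INR k) by (apply lt_0_INR; lia).
  assert (Hn : INR n = INR k * a + j1)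
    by (unfold a, j1; rewrite <- mult_INR, <- plus_INR, <- n_divmod; reflexivity).
  assert (Hkj : INR k = j1 + j2) by (rewrite <- k1_add_k2, plus_INR; reflexivity).
  assert (Hj1 : 0 <= j1) by apply pos_INR.
  assert (Hj2 : 0 <= j2) by apply pos_INR.
  assert (Hf : 2 * INR (fedges n k) <= j1 * (a + 1) * a + j2 * a * (a - 1)).
  { unfold fedges. rewrite plus_INR, !mult_INR.
    pose proof (INR_half_pred_mul_le (szfl n k)) as Hfl. fold a in Hfl.
    assert (j1 * INR (szcl n k * (szcl n k - 1) / 2) <= j1 * ((a + 1) * a) / 2).
    { destruct (Nat.eq_dec (k1 n k) 0) as [E|E].
      - unfold j1. rewrite E. simpl. lra.
      - pose proof (INR_half_pred_mul_le (szcl n k)) as Hcl.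
        rewrite szcl_succ, S_INR in Hcl by exact E. fold a in Hcl.
        rewrite szcl_succ by exact E.
        apply Rmult_le_compat_l with (r := j1) in Hcl; [lra | exact Hj1]. }
    fold j1 j2.
    apply Rmult_le_compat_l with (r := j2) in Hfl; [lra | exact Hj2]. }
  assert (Hsq : INR k * (j1 * (a + 1) * a + j2 * a * (a - 1))
                = INR n * (INR n - INR k) + INR k * INR k / 4 - (j1 - INR k / 2) ^ 2)
    by (rewrite Hn, Hkj; field).
  assert (Hsq0 : 0 <= (j1 - INR k / 2) ^ 2) by apply pow2_ge_0.
  apply (Rmult_le_reg_r (2 * INR k)); [lra|].
  replace ((INR n * (INR n / INR k - 1) / 2 + INR k / 8) * (2 * INR k))
    with (INR n * (INR n - INR k) + INR k * INR k / 4) by (field; lra).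
  nra.
Qed.

End Equipartition.

Definition mu_ratio (p : R) (n k : nat) : R :=
  mu p n k / (INR (fact (k1 n k)) * INR (fact (k2 n k))).

Lemma ln_qq p : 0 < p < 1 -> ln (qq p) = - ln (bb p).
Proof. intros hp. unfold bb, qq. rewrite ln_div, ln_1 by lra. ring. Qed.

Lemma ln_bb_gt0 p : 0 < p < 1 -> 0 < ln (bb p).
Proof.
  intros hp. rewrite <- ln_1. apply ln_increasing; [lra|].
  unfold bb, qq. apply (Rmult_lt_reg_r (1 - p)); [lra|]. field_simplify; lra.
Qed.

Lemma ln_mu_ratio p n k : 0 < p < 1 ->
  0 < mu_ratio p n k /\
  ln (mu_ratio p n k) = lnfact n - INR (k1 n k) * lnfact (szcl n k)
    - INR (k2 n k) * lnfact (szfl n k) - INR (fedges n k) * ln (bb p)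
    - (lnfact (k1 n k) + lnfact (k2 n k)).
Proof.
  intros hp. assert (Hq : 0 < qq p) by (unfold qq; lra).
  pose proof (INR_fact_gt0 n). pose proof (INR_fact_gt0 (k1 n k)).
  pose proof (INR_fact_gt0 (k2 n k)).
  pose proof (INR_fact_gt0 (szcl n k)). pose proof (INR_fact_gt0 (szfl n k)).
  assert (Hc : 0 < INR (fact (szcl n k)) ^ k1 n k) by (apply pow_lt, INR_fact_gt0).
  assert (Hf : 0 < INR (fact (szfl n k)) ^ k2 n k) by (apply pow_lt, INR_fact_gt0).
  assert (Hqf : 0 < qq p ^ fedges n k) by (apply pow_lt; lra).
  assert (HP : 0 < Pnum n k) by (apply Rdiv_lt_0_compat, Rmult_lt_0_compat; lra).
  unfold mu_ratio, mu. split.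
  - apply Rdiv_lt_0_compat; apply Rmult_lt_0_compat; lra.
  - rewrite ln_div, !ln_mult by (first [lra | apply Rmult_lt_0_compat; lra]).
    unfold Pnum.
    rewrite ln_div, ln_mult, !ln_pow, ln_qq by (first [lra | apply Rmult_lt_0_compat; lra]).
    unfold lnfact. ring.
Qed.

Lemma lnfact_blocks_le n k : (0 < k)%nat -> (k <= n)%nat ->
  let l := ln (INR n / INR k + 1) in
  INR (k1 n k) * lnfact (szcl n k) + INR (k2 n k) * lnfact (szfl n k)
    <= INR n * l - INR n + INR k * (l + 1).
Proof.
  intros Hk Hkn l.
  set (a := szfl n k). set (la := ln (INR a + 1)).
  assert (Ha : (1 <= a)%nat) by (apply Nat.div_str_pos; lia).
  assert (HaR : 1 <= INR a) by (apply (le_INR 1); exact Ha).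
  assert (HkR : 0 < INR k) by (apply lt_0_INR; lia).
  assert (Hn : INR n = INR k * INR a + INR (k1 n k))
    by (unfold a; rewrite <- mult_INR, <- plus_INR, <- n_divmod by lia; reflexivity).
  assert (Hkj : INR k = INR (k1 n k) + INR (k2 n k))
    by (rewrite <- plus_INR, k1_add_k2 by lia; reflexivity).
  assert (Hj1 : 0 <= INR (k1 n k)) by apply pos_INR.
  assert (Hj2 : 0 <= INR (k2 n k)) by apply pos_INR.
  assert (Hceil : INR (k1 n k) * lnfact (szcl n k)
                  <= INR (k1 n k) * ((INR a + 1) * la - (INR a + 1) + la + 1)).
  { destruct (Nat.eq_dec (k1 n k) 0) as [E|E]; [rewrite E; simpl; lra|].
    rewrite szcl_succ by (lia || exact E).
    apply Rmult_le_compat_l; [exact Hj1|].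
    pose proof (lnfact_le (S a) ltac:(lia)) as H. rewrite S_INR in H. exact H. }
  assert (Hfloor : INR (k2 n k) * lnfact a
                   <= INR (k2 n k) * (INR a * la - INR a + la + 1)).
  { apply Rmult_le_compat_l; [exact Hj2|].
    pose proof (lnfact_le a Ha) as H.
    assert (ln (INR a) <= la) by (apply ln_le; lra).
    assert (INR a * ln (INR a) <= INR a * la) by (apply Rmult_le_compat_l; lra).
    lra. }
  assert (Hla : la <= l).
  { apply ln_le; [lra|]. apply Rplus_le_compat_r.
    apply (Rmult_le_reg_r (INR k)); [exact HkR|].
    unfold Rdiv. rewrite Rmult_assoc, Rinv_l, Rmult_1_r by lra. nra. }
  assert (Hsum : INR (k1 n k) * ((INR a + 1) * la - (INR a + 1) + la + 1)
                 + INR (k2 n k) * (INR a * la - INR a + la + 1)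
                 = INR n * la - INR n + INR k * (la + 1))
    by (rewrite Hn, Hkj; ring).
  assert (0 <= INR n) by apply pos_INR.
  nra.
Qed.

Lemma ln_mu_ratio_ge p n k : 0 < p < 1 -> (1 <= k)%nat -> (k <= n)%nat ->
  let l := ln (INR n / INR k + 1) in
  (INR n - INR k) * ln (INR k) - INR k * (1 + l)
    - ln (bb p) * (INR n * (INR n / INR k - 1) / 2 + INR k / 8) - ln (INR n) - 1
    <= ln (mu_ratio p n k).
Proof.
  intros hp Hk Hkn l.
  destruct (ln_mu_ratio p n k hp) as [_ ->].
  assert (HkR : 0 < INR k) by (apply lt_0_INR; lia).
  assert (Hkn' : INR k <= INR n) by (apply le_INR; exact Hkn).
  pose proof (lnfact_ge n ltac:(lia)) as Hn.
  pose proof (lnfact_blocks_le n k ltac:(lia) Hkn) as Hblocks. fold l in Hblocks.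
  assert (Hsplit : lnfact (k1 n k) + lnfact (k2 n k)
                   <= INR k * ln (INR k) - INR k + ln (INR k) + 1).
  { eapply Rle_trans; [apply lnfact_add_le|].
    rewrite k1_add_k2 by lia. apply lnfact_le; exact Hk. }
  assert (Hf : INR (fedges n k) * ln (bb p)
               <= ln (bb p) * (INR n * (INR n / INR k - 1) / 2 + INR k / 8)).
  { rewrite Rmult_comm. apply Rmult_le_compat_l; [left; apply ln_bb_gt0, hp|].
    apply fedges_le. lia. }
  assert (Hl : INR n * l <= INR n * ln (INR n) - INR n * ln (INR k) + INR k).
  { assert (Hlk : l = ln (INR n + INR k) - ln (INR k)).
    { unfold l. rewrite <- ln_div by lra. f_equal. field. lra. }
    pose proof (ln_add_le (INR n) (INR k) ltac:(lra) ltac:(lra)) as H.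
    apply Rmult_le_compat_l with (r := INR n) in H; [|lra].
    replace (INR n * (ln (INR n) + INR k / INR n))
      with (INR n * ln (INR n) + INR k) in H by (field; lra).
    rewrite Hlk. lra. }
  assert (ln (INR k) <= ln (INR n)) by (apply ln_le; lra).
  lra.
Qed.

Lemma ceil_div_bounds n D : 1 <= D -> (1 <= n)%nat ->
  let k := Z.to_nat (ceilR (INR n / D)) in
  (1 <= k)%nat /\ (k <= n)%nat /\ INR n / D <= INR k /\ INR k < INR n / D + 1
  /\ INR n / INR k <= D.
Proof.
  intros HD Hn k.
  assert (HnR : 1 <= INR n) by (apply (le_INR 1); exact Hn).
  assert (HnD : 0 < INR n / D) by (apply Rdiv_lt_0_compat; lra).
  assert (HkR : INR k = IZR (ceilR (INR n / D))) by (apply INR_ceilR; exact HnD).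
  destruct (ceilR_spec (INR n / D)) as [Hk_lt Hk_ge]. rewrite <- HkR in Hk_lt, Hk_ge.
  assert (HnD_le : INR n / D <= INR n) by (apply Rdiv_le_self; lra).
  repeat split; try lra.
  - apply (INR_lt 0); simpl; lra.
  - apply Nat.lt_succ_r, INR_lt; rewrite S_INR; lra.
  - apply (Rmult_le_reg_r (INR k)); [lra|].
    unfold Rdiv. rewrite Rmult_assoc, Rinv_l, Rmult_1_r by lra.
    apply (Rmult_le_reg_r (/ D)); [apply Rinv_0_lt_compat; lra|].
    rewrite (Rmult_comm D), Rmult_assoc, Rinv_r, Rmult_1_r by lra. exact Hk_ge.
Qed.

Lemma ln_mu_ratio_ceil_ge p n D : 0 < p < 1 -> 1 <= D -> (1 <= n)%nat ->
  let k := Z.to_nat (ceilR (INR n / D)) in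
  INR n * ln (INR n) - INR n * ln D - ln (bb p) * INR n * (D - 1) / 2
    - (INR n / D + 1) * (ln (INR n) + 1 + ln (D + 1) + ln (bb p) / 8) - ln (INR n) - 1
    <= ln (mu_ratio p n k).
Proof.
  intros hp HD Hn k.
  destruct (ceil_div_bounds n D HD Hn) as (Hk1 & Hkn & Hk_ge & Hk_lt & Hnk).
  fold k in Hk1, Hkn, Hk_ge, Hk_lt, Hnk.
  pose proof (ln_mu_ratio_ge p n k hp Hk1 Hkn) as H. simpl in H.
  assert (HnR : 1 <= INR n) by (apply (le_INR 1); exact Hn).
  assert (Hk0 : 0 < INR k) by (apply (lt_INR 0); lia).
  assert (HnD : 0 < INR n / D) by (apply Rdiv_lt_0_compat; lra).
  assert (HL : 0 < ln (bb p)) by (apply ln_bb_gt0, hp).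
  assert (Hlnk : ln (INR n) - ln D <= ln (INR k)) by (rewrite <- ln_div by lra; apply ln_le; lra).
  assert (HlnD : 0 <= ln D) by (rewrite <- ln_1; apply ln_le; lra).
  assert (Hln1 : ln (INR n / INR k + 1) <= ln (D + 1))
    by (apply ln_le; [apply Rplus_lt_le_0_compat; [apply Rdiv_lt_0_compat|]|]; lra).
  assert (Hlnn : 0 <= ln (INR n)) by (rewrite <- ln_1; apply ln_le; lra).
  assert (HlnD1 : 0 <= ln (D + 1)) by (rewrite <- ln_1; apply ln_le; lra).
  assert (Hkn' : INR k <= INR n) by (apply le_INR; exact Hkn).
  assert (Hfirst : INR n * ln (INR n) - INR n * ln D - INR k * ln (INR n)
                   <= (INR n - INR k) * ln (INR k)).
  { assert ((INR n - INR k) * (ln (INR n) - ln D) <= (INR n - INR k) * ln (INR k))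
      by (apply Rmult_le_compat_l; lra).
    assert (0 <= INR k * ln D) by (apply Rmult_le_pos; lra). nra. }
  assert (Hpairs : INR n * (INR n / INR k - 1) <= INR n * (D - 1))
    by (apply Rmult_le_compat_l; lra).
  assert (Hcoef : INR k * (ln (INR n) + 1 + ln (D + 1) + ln (bb p) / 8)
                  <= (INR n / D + 1) * (ln (INR n) + 1 + ln (D + 1) + ln (bb p) / 8))
    by (apply Rmult_le_compat_r; lra).
  assert (INR k * ln (INR n / INR k + 1) <= INR k * ln (D + 1))
    by (apply Rmult_le_compat_l; lra).
  assert (ln (bb p) * (INR n * (INR n / INR k - 1)) <= ln (bb p) * (INR n * (D - 1)))
    by (apply Rmult_le_compat_l; lra).
  lra.
Qed.

Section GammaEstimates.

Variables L eps x th T D n : R.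
Hypotheses (L_gt0 : 0 < L) (x_bounds : 0 <= x <= 1) (th_bounds : 0 <= th <= eps).
Hypotheses (T_ge1 : 1 <= T) (T_large : 6 + L * (1 + eps) <= L * sqrt T).
Hypothesis LD_eq : L * D = 2 * L * T - 2 * ln T - 2 * ln 2 - L * (x + th).

Let s := sqrt T.

Lemma sqrt_T_facts : 1 <= s /\ s * s = T /\ 0 <= ln T <= 2 * s /\ 0 < ln 2 <= 1.
Proof.
  assert (Hs : s * s = T) by (apply sqrt_sqrt; lra).
  assert (H1 : 1 <= s) by (unfold s; rewrite <- sqrt_1; apply sqrt_le_1_alt; lra).
  assert (Hl0 : 0 <= ln T) by (rewrite <- ln_1; apply ln_le; lra).
  assert (Hl2 : 0 < ln 2) by (rewrite <- ln_1; apply ln_increasing; lra).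
  pose proof (ln_le_2sqrt T ltac:(lra)) as HlT. fold s in HlT.
  pose proof (ln_le_sub1 2 ltac:(lra)).
  repeat split; lra.
Qed.

Lemma D_between : T <= D <= 2 * T.
Proof.
  destruct sqrt_T_facts as (Hs1 & Hss & HlnT & Hln2).
  assert (Hxth : 0 <= L * (x + th) <= L * (1 + eps))
    by (split; [apply Rmult_le_pos|apply Rmult_le_compat_l]; lra).
  assert (HT : (6 + L * (1 + eps)) * s <= L * T).
  { pose proof T_large as HL. fold s in HL.
    rewrite <- Hss, <- Rmult_assoc. apply Rmult_le_compat_r; lra. }
  split; apply (Rmult_le_reg_l L); nra.
Qed.

Lemma ln_D_add1_le : ln (D + 1) <= 4 * s.
Proof.
  destruct sqrt_T_facts as (Hs1 & Hss & _ & _). pose proof D_between.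
  eapply Rle_trans; [apply ln_le_2sqrt; lra|].
  assert (sqrt (D + 1) <= 2 * s); [|lra].
  rewrite <- (sqrt_square (2 * s)) by lra. apply sqrt_le_1_alt. nra.
Qed.

Hypotheses (n_gt0 : 0 < n) (ln_n : ln n = L * T).

(* The main term n ln n - n ln D - L n D / 2 collapses to n (ln (2T) - ln D) + n L (x + th) / 2. *)
Lemma main_term_ge : n * L * th / 2 <= n * ln n - n * ln D - L * n * D / 2.
Proof.
  destruct sqrt_T_facts as (_ & _ & _ & Hln2). pose proof D_between.
  assert (HlnD : ln D <= ln 2 + ln T) by (rewrite <- ln_mult by lra; apply ln_le; lra).
  assert (Hx : 0 <= n * L * x) by (apply Rmult_le_pos; [apply Rmult_le_pos|]; lra).
  assert (E : n * ln n - n * ln D - L * n * D / 2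
              = n * (ln 2 + ln T - ln D) + n * L * (x + th) / 2)
    by (replace (L * n * D) with (n * (L * D)) by ring; rewrite LD_eq, ln_n; field).
  assert (0 <= n * (ln 2 + ln T - ln D)) by (apply Rmult_le_pos; lra).
  lra.
Qed.

Lemma n_div_T : n / T = n / s / s.
Proof. destruct sqrt_T_facts as (Hs1 & Hss & _). rewrite <- Hss. field. lra. Qed.

Lemma n_div_D_le : n / D <= n / T.
Proof.
  pose proof D_between. apply Rmult_le_compat_l; [lra|]. apply Rinv_le_contravar; lra.
Qed.

Lemma lead_terms_le : n / D * ln n - L * n / 2 <= n / s * (6 + L * (1 + eps)) / 2.
Proof.
  destruct sqrt_T_facts as (Hs1 & Hss & HlnT & Hln2). pose proof D_between.
  set (Q := 2 * ln T + 2 * ln 2 + L * (x + th)).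
  assert (HQ : 0 <= Q <= 4 * s + 2 + L * (1 + eps)).
  { assert (0 <= L * (x + th) <= L * (1 + eps))
      by (split; [apply Rmult_le_pos|apply Rmult_le_compat_l]; lra).
    unfold Q; lra. }
  assert (Hlead : n / D * ln n - L * n / 2 = n / D * Q / 2).
  { replace (L * n / 2) with (n / D * (L * D) / 2) by (field; lra).
    rewrite LD_eq, ln_n. unfold Q. field. lra. }
  set (w := n / s).
  assert (Hw : 0 <= w) by (apply Rdiv_le_0_compat; lra).
  assert (HQD : n / D * Q <= w / s * (4 * s + 2 + L * (1 + eps))).
  { pose proof n_div_T as HnT. fold w in HnT. rewrite <- HnT. pose proof n_div_D_le.
    apply Rmult_le_compat; try lra. apply Rdiv_le_0_compat; lra. }
  assert (HwL : w / s * (2 + L * (1 + eps)) <= w * (2 + L * (1 + eps))).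
  { assert (0 <= L * (1 + eps)) by (apply Rmult_le_pos; lra).
    replace (w / s * (2 + L * (1 + eps))) with (w * (2 + L * (1 + eps)) / s) by (field; lra).
    apply Rdiv_le_self; [apply Rmult_le_pos|]; lra. }
  replace (w / s * (4 * s + 2 + L * (1 + eps)))
    with (4 * w + w / s * (2 + L * (1 + eps))) in HQD by (field; lra).
  lra.
Qed.

Lemma tail_terms_le : n / D * (1 + ln (D + 1) + L / 8) <= n / s * (5 + L / 8).
Proof.
  destruct sqrt_T_facts as (Hs1 & Hss & _). pose proof D_between.
  pose proof ln_D_add1_le. pose proof n_div_D_le. pose proof n_div_T as HnT.
  assert (0 <= n / s) by (apply Rdiv_le_0_compat; lra).
  assert (n / D * (1 + ln (D + 1) + L / 8) <= n / T * (1 + 4 * s + L / 8)).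
  { assert (0 <= ln (D + 1)) by (rewrite <- ln_1; apply ln_le; lra).
    assert (0 <= n / D) by (apply Rdiv_le_0_compat; lra).
    apply Rmult_le_compat; lra. }
  assert (n / T <= n / s) by (rewrite HnT; apply Rdiv_le_self; lra).
  assert (n / T * (1 + L / 8) <= n / s * (1 + L / 8)) by (apply Rmult_le_compat_r; lra).
  assert (n / T * (4 * s) = 4 * (n / s)) by (rewrite HnT; field; lra).
  lra.
Qed.

Lemma error_terms_le :
  - L * n / 2 + (n / D + 1) * (ln n + 1 + ln (D + 1) + L / 8) + ln n + 1
    <= (8 + 2 * L * (1 + eps)) * (n / s + T + 1).
Proof.
  destruct sqrt_T_facts as (Hs1 & Hss & _). pose proof D_between.
  pose proof ln_D_add1_le. pose proof lead_terms_le. pose proof tail_terms_le.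
  assert (Hw : 0 <= n / s) by (apply Rdiv_le_0_compat; lra).
  assert (Hs_T : s <= T) by nra.
  assert (Hsplit : (n / D + 1) * (ln n + 1 + ln (D + 1) + L / 8) + ln n + 1 - L * n / 2
                   = (n / D * ln n - L * n / 2) + n / D * (1 + ln (D + 1) + L / 8)
                     + 2 * (L * T) + 2 + ln (D + 1) + L / 8) by (rewrite ln_n; ring).
  assert (0 <= L * (1 + eps) * (n / s)) by (apply Rmult_le_pos; [apply Rmult_le_pos|]; lra).
  assert (0 <= L * eps * T) by (apply Rmult_le_pos; [apply Rmult_le_pos|]; lra).
  assert (0 <= L * (n / s)) by (apply Rmult_le_pos; lra).
  nra.
Qed.

End GammaEstimates.

Lemma is_x0_bounds p n x : is_x0 p n x -> 0 <= x <= 1.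
Proof.
  intros (Hx0 & _ & Hmin).
  assert (HD : Defs.Delta p n <= 1).
  { unfold Defs.Delta, floorR. destruct (base_Int_part (gam p n)). lra. }
  assert (x <= Defs.Delta p n); [|lra].
  apply Hmin; [unfold Defs.Delta, floorR; destruct (base_Int_part (gam p n)); lra|].
  unfold Fx0, logb. replace (1 - Defs.Delta p n + Defs.Delta p n) with 1 by ring.
  rewrite ln_1. lra.
Qed.

Lemma ln_bb_mul_gam p n : 0 < p < 1 ->
  let T := logb p (INR n) in
  ln (bb p) * gam p n = 2 * ln (bb p) * T - 2 * ln T - 2 * ln 2.
Proof.
  intros hp T. pose proof (ln_bb_gt0 p hp). unfold T, gam, logb. field. lra.
Qed.

Definition mu_error (p eps : R) (n : nat) : R :=
  let T := logb p (INR n) in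
  (8 + 2 * ln (bb p) * (1 + eps)) * (INR n / sqrt T + T + 1).

Lemma ln_mu_ratio_kk_ge p eps th x n : 0 < p < 1 -> 0 <= th <= eps -> is_x0 p n x ->
  (1 <= n)%nat -> 1 <= logb p (INR n) ->
  6 + ln (bb p) * (1 + eps) <= ln (bb p) * sqrt (logb p (INR n)) ->
  th * INR n * ln (bb p) / 2 - mu_error p eps n <= ln (mu_ratio p n (kk p n x th)).
Proof.
  intros hp Hth Hx Hn HT Hlarge.
  pose proof (ln_bb_gt0 p hp) as HL. pose proof (is_x0_bounds p n x Hx) as Hxb.
  pose proof (ln_bb_mul_gam p n hp) as Hgam. simpl in Hgam.
  set (L := ln (bb p)) in *. set (T := logb p (INR n)) in *.
  set (D := gam p n - x - th).
  assert (HLD : L * D = 2 * L * T - 2 * ln T - 2 * ln 2 - L * (x + th))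
    by (unfold D; rewrite !Rmult_minus_distr_l, Hgam; ring).
  assert (HnR : 0 < INR n) by (apply lt_0_INR; lia).
  assert (Hlnn : ln (INR n) = L * T) by (unfold T, logb; fold L; field; lra).
  pose proof (D_between L eps x th T D HL Hxb Hth HT Hlarge HLD).
  pose proof (ln_mu_ratio_ceil_ge p n D hp ltac:(lra) Hn) as Hceil. fold L in Hceil.
  pose proof (main_term_ge L eps x th T D (INR n) HL Hxb Hth HT Hlarge HLD HnR Hlnn).
  pose proof (error_terms_le L eps x th T D (INR n) HL Hxb Hth HT Hlarge HLD HnR Hlnn).
  unfold mu_error. fold L T. unfold kk. fold D.
  lra.
Qed.

Lemma is_lim_seq_logb p : 0 < p < 1 -> is_lim_seq (fun n => logb p (INR n)) p_infty.
Proof.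
  intros hp. pose proof (ln_bb_gt0 p hp) as HL.
  assert (Hln : is_lim_seq (fun n => ln (INR n)) p_infty)
    by (apply (is_lim_comp_seq ln INR p_infty p_infty is_lim_ln_p);
        [exists 0%nat; discriminate | apply is_lim_seq_INR]).
  apply is_lim_seq_spec. intros M.
  destruct (proj2 (is_lim_seq_spec _ _) Hln (M * ln (bb p))) as [N HN].
  exists N. intros n Hn. specialize (HN n Hn).
  unfold logb. apply (Rmult_lt_reg_r (ln (bb p))); [exact HL|].
  unfold Rdiv. rewrite Rmult_assoc, Rinv_l, Rmult_1_r by lra. exact HN.
Qed.

Lemma is_lim_seq_mu_error_div p eps : 0 < p < 1 ->
  is_lim_seq (fun n => mu_error p eps n / INR n) 0.
Proof.
  intros hp. pose proof (ln_bb_gt0 p hp) as HL.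
  set (C := 8 + 2 * ln (bb p) * (1 + eps)).
  set (T := fun n => logb p (INR n)).
  assert (Hinv_sqrt : is_lim_seq (fun n => / sqrt (T n)) 0).
  { apply (is_lim_seq_inv _ p_infty); [|discriminate].
    apply (is_lim_comp_seq sqrt T p_infty p_infty);
      [apply is_lim_sqrt_p, is_lim_id | exists 0%nat; discriminate | apply is_lim_seq_logb, hp]. }
  assert (HT_n : is_lim_seq (fun n => T n / INR n) 0).
  { assert (Hln : is_lim_seq (fun n => ln (INR n) / INR n) 0)
      by (apply (is_lim_comp_seq (fun y => ln y / y) INR p_infty 0 is_lim_div_ln_p);
          [exists 0%nat; discriminate | apply is_lim_seq_INR]).
    pose proof (is_lim_seq_mult' _ _ _ _ Hln (is_lim_seq_const (/ ln (bb p)))) as H.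
    rewrite Rmult_0_l in H. revert H. apply is_lim_seq_ext. intros n.
    unfold T, logb, Rdiv. ring. }
  assert (Hinv_n : is_lim_seq (fun n => / INR n) 0)
    by (apply (is_lim_seq_inv _ p_infty); [apply is_lim_seq_INR | discriminate]).
  pose proof (is_lim_seq_plus' _ _ _ _ (is_lim_seq_plus' _ _ _ _ Hinv_sqrt HT_n) Hinv_n) as Hsum.
  pose proof (is_lim_seq_mult' _ _ _ _ (is_lim_seq_const C) Hsum) as H.
  rewrite !Rplus_0_r, Rmult_0_r in H.
  revert H. apply is_lim_seq_ext_loc. exists 1%nat. intros n Hn.
  assert (HnR : INR n <> 0) by (apply not_0_INR; lia).
  unfold mu_error. fold C (T n). unfold Rdiv.
  replace (C * (INR n * / sqrt (T n) + T n + 1) * / INR n)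
    with (C * (/ sqrt (T n) * (INR n * / INR n) + T n * / INR n + / INR n)) by ring.
  rewrite Rinv_r by exact HnR. ring.
Qed.

Lemma exp_le_exp x y : x <= y -> exp x <= exp y.
Proof.
  intros [H | ->]; [left; apply exp_increasing, H | right; reflexivity].
Qed.

Lemma eventually_logb_large p eps : 0 < p < 1 ->
  eventually (fun n => (1 <= n)%nat /\ 1 <= logb p (INR n) /\
    6 + ln (bb p) * (1 + eps) <= ln (bb p) * sqrt (logb p (INR n))).
Proof.
  intros hp. pose proof (ln_bb_gt0 p hp) as HL.
  set (c := (6 + ln (bb p) * (1 + eps)) / ln (bb p)).
  destruct (proj2 (is_lim_seq_spec _ _) (is_lim_seq_logb p hp) (Rmax 1 (c * c))) as [N HN].
  exists (S N). intros n Hn. specialize (HN n ltac:(lia)).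
  pose proof (Rmax_l 1 (c * c)). pose proof (Rmax_r 1 (c * c)).
  repeat split; [lia | lra |].
  assert (Hc : Rabs c <= sqrt (logb p (INR n)))
    by (rewrite <- sqrt_Rsqr_abs; apply sqrt_le_1_alt; unfold Rsqr; lra).
  replace (6 + ln (bb p) * (1 + eps)) with (ln (bb p) * c) by (unfold c; field; lra).
  apply Rmult_le_compat_l; [lra|]. pose proof (Rle_abs c). lra.
Qed.

Theorem mainTheorem9 (p eps : R) (hp : 0 < p < 1) (heps : 0 < eps)
  (theta : nat -> R) (htheta : forall n, 0 <= theta n <= eps)
  (x0 : nat -> R) (hx0 : forall n, is_x0 p n (x0 n)) :
  exists h : nat -> R,
    Un_cv (fun n => h n / INR n) 0 /\
    exists N : nat, forall n : nat, (N <= n)%nat ->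
      let k := kk p n (x0 n) (theta n) in
      mu p n k / (INR (fact (k1 n k)) * INR (fact (k2 n k)))
        >= Rpower (bb p) (theta n * INR n / 2) * exp (h n).
Proof.
  exists (fun n => - mu_error p eps n). split.
  - apply is_lim_seq_Reals.
    apply (is_lim_seq_ext (fun n => - (mu_error p eps n / INR n))); [intros n; unfold Rdiv; ring|].
    replace 0 with (- 0) by ring. apply (is_lim_seq_opp _ 0), is_lim_seq_mu_error_div, hp.
  - destruct (eventually_logb_large p eps hp) as [N HN]. exists N. intros n Hn k.
    destruct (HN n Hn) as (Hn1 & HT & Hlarge).
    pose proof (ln_mu_ratio_kk_ge p eps (theta n) (x0 n) n hp (htheta n) (hx0 n) Hn1 HT Hlarge) as H.
    destruct (ln_mu_ratio p n k hp) as [Hpos _].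
    change (mu_ratio p n k >= Rpower (bb p) (theta n * INR n / 2) * exp (- mu_error p eps n)).
    unfold Rpower. rewrite <- exp_plus, <- (exp_ln _ Hpos).
    apply Rle_ge, exp_le_exp. unfold k. lra.
Qed.
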